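(* Let $r\ge 2$ and $m$ be integers with $0\le 2m\le r$, $n=2r-4m$, and let $f:S^2(S^r(\mathbb{C}^2))\to S^{n}(\mathbb{C}^2)$ be an $\mathfrak{sl}_2(\mathbb{C})$-equivariant linear map, written $f=\sum_{k=0}^n q_k w_k$, each $q_k$ viewed as a symmetric bilinear form on $S^r(\mathbb{C}^2)$. Then for every $0\le k\le n/2$, $$\mathrm{rk}(q_k)=\mathrm{rk}(q_{n-k})\le 2m+k+1.$$
   Context: $\mathfrak{sl}_2(\mathbb{C})$ has basis $X=\begin{pmatrix}0&1\\0&0\end{pmatrix}$, $H=\begin{pmatrix}1&0\\0&-1\end{pmatrix}$, $Y=\begin{pmatrix}0&0\\1&0\end{pmatrix}$, acting on the irreducible modules $S^d(\mathbb{C}^2)$. Let $w_0\in S^n(\mathbb{C}^2)$ be a highest weight vector and $w_k=Y^kw_0/k!$ ($0\le k\le n$). Writing $f=\sum_{k=0}^n q_kw_k$ means $f(u)=\sum_k q_k(u)w_k$ for linear forms $q_k$ on $S^2(S^r(\mathbb{C}^2))$, equivalently symmetric bilinear forms $(u,v)\mapsto q_k(uv)$ on $S^r(\mathbb{C}^2)$; $\mathrm{rk}$ denotes the rank of the bilinear form. *)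

From HB Require Import structures.
From mathcomp Require Import all_boot all_order all_algebra.
Set Implicit Arguments. Unset Strict Implicit. Unset Printing Implicit Defensive.
Import Order.TTheory GRing.Theory Num.Theory.
Local Open Scope ring_scope.

(* The irreducible sl_2-module S^d(C^2), in the monomial basis
   e_i = x^(d-i) y^i  (i = 0..d), vectors as column vectors 'cV_(d.+1).
   X = x d/dy :  X e_i = i e_(i-1)
   Y = y d/dx :  Y e_i = (d-i) e_(i+1)
   H = x d/dx - y d/dy :  H e_i = (d - 2i) e_i                            *)
Section Sl2.
Variable F : numClosedFieldType.

Definition sl2X (d : nat) : 'M[F]_(d.+1) :=
  \matrix_(i, j) (if j == i.+1 :> nat then (j : nat)%:R else 0).
Definition sl2Y (d : nat) : 'M[F]_(d.+1) :=
  \matrix_(i, j) (if i == j.+1 :> nat then (d - j)%:R else 0).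
Definition sl2H (d : nat) : 'M[F]_(d.+1) :=
  \matrix_(i, j) (if i == j then (d%:R - (2 * i)%:R) else 0).

(* A bilinear map S^r x S^r -> S^n given by coordinate Gram matrices:
   (bilin T u v)_l = u^T (T l) v.  It is symmetric (hence a linear map
   on S^2(S^r)) iff every T l is symmetric. *)
Definition bilin (r n : nat) (T : 'I_n.+1 -> 'M[F]_(r.+1))
  (u v : 'cV[F]_(r.+1)) : 'cV[F]_(n.+1) :=
  \col_l (u^T *m T l *m v) 0 0.

(* sl_2-equivariance of the induced linear map f : S^2(S^r) -> S^n,
   f(uv) = bilin T u v, where Z.(uv) = (Z u) v + u (Z v). *)
Definition equivariant (r n : nat) (T : 'I_n.+1 -> 'M[F]_(r.+1)) : Prop :=
  (forall l, (T l)^T = T l) /\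
  forall u v,
    [/\ sl2X n *m bilin T u v = bilin T (sl2X r *m u) v + bilin T u (sl2X r *m v),
        sl2H n *m bilin T u v = bilin T (sl2H r *m u) v + bilin T u (sl2H r *m v) &
        sl2Y n *m bilin T u v = bilin T (sl2Y r *m u) v + bilin T u (sl2Y r *m v)].

Definition wvec (n : nat) (w0 : 'cV[F]_(n.+1)) (k : nat) : 'cV[F]_(n.+1) :=
  (k`!%:R)^-1 *: (sl2Y n ^+ k *m w0).

End Sl2.

(* Let T_l be the Gram matrix of the l-th coordinate of f in the monomial basis
   e_i = x^(r-i) y^i.  Since X w0 = 0, w0 is a multiple of e_0, so w_l = C(n,l) w0_0 e_l
   and q_l is a nonzero multiple of T_l.  Equivariance becomes recurrences on the
   entries T_l(e_i, e_j): the H-weights force i + j = 2m + l, so the rows of T_k past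
   2m + k vanish; the X-relation determines T_(l+1) from T_l, and the Y-relation at
   l = 0 runs along the anti-diagonal i + j = 2m.  Hence an equivariant map is
   determined by the single entry T_0(e_0, e_2m), i.e. S^n occurs once in S^2(S^r).
   Conjugating by the Weyl reflection e_i <-> e_(r-i), which exchanges X and Y, gives
   an equivariant map with Gram matrices the reversed T_(n-l); it is thus a multiple
   of f, and as the reflection is an involution, T_k and T_(n-k) have equal rank. *)

From HB Require Import structures.
From mathcomp Require Import all_boot all_order all_algebra.
From mathcomp Require Import zify ring.
Import Order.TTheory GRing.Theory Num.Theory.
Local Open Scope ring_scope.
Set Implicit Arguments. Unset Strict Implicit. Unset Printing Implicit Defensive.

Section Sl2Action.
Variables (F : numClosedFieldType) (d : nat).
Implicit Types (c : 'cV[F]_(d.+1)) (g : nat -> F).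

(* e_i, extended by zero to i > d so that the action formulas need no range
   conditions. *)
Definition mono (i : nat) : 'cV[F]_(d.+1) := \col_k ((k : nat) == i)%:R.

Lemma mono_ord (i : 'I_d.+1) : mono i = delta_mx i 0.
Proof. by apply/matrixP => k z; rewrite (ord1 z) !mxE andbT. Qed.

Lemma mono_inord (i : nat) : (i <= d)%N -> mono i = delta_mx (inord i) 0.
Proof. by move=> le_id; rewrite -mono_ord inordK. Qed.

Lemma mono_out (i : nat) : (d < i)%N -> mono i = 0.
Proof.
by move=> lt_di; apply/matrixP => k z; rewrite !mxE ltn_eqF // (leq_trans (ltn_ord k)).
Qed.

Lemma sl2X_mono (i : nat) : (i <= d)%N -> sl2X F d *m mono i = i%:R *: mono i.-1.
Proof.
move=> le_id; rewrite !mono_inord ?(leq_trans (leq_pred i)) //.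
apply/matrixP => p z; rewrite (ord1 z) -colE !mxE inordK //.
case: i le_id => [|i] le_id; first by rewrite mul0r.
rewrite eqSS -val_eqE /= inordK ?ltnS ?(ltnW le_id) //.
by case: eqVneq => [->|_]; rewrite ?eqxx ?mulr1 ?mulr0.
Qed.

Lemma sl2Y_mono (i : nat) : sl2Y F d *m mono i = (d - i)%:R *: mono i.+1.
Proof.
have [lt_id|le_di] := ltnP i d; last first.
  rewrite (@mono_out i.+1) ?ltnS // scaler0.
  move: le_di; rewrite leq_eqVlt => /orP[/eqP <-|lt_di]; last by rewrite mono_out ?mulmx0.
  apply/matrixP => p z; rewrite mono_inord // -colE !mxE inordK //.
  by rewrite ltn_eqF.
rewrite (mono_inord (ltnW lt_id)) (mono_inord lt_id); apply/matrixP => p z.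
rewrite (ord1 z) -colE !mxE -val_eqE /= !inordK ?ltnS ?(ltnW lt_id) //.
by case: eqVneq => _; rewrite ?mulr1 ?mulr0.
Qed.

Lemma sl2H_mono (i : nat) : sl2H F d *m mono i = (d%:R - (2 * i)%:R) *: mono i.
Proof.
have [le_id|lt_di] := leqP i d; last by rewrite mono_out // scaler0 mulmx0.
rewrite mono_inord //; apply/matrixP => p z; rewrite (ord1 z) -colE !mxE andbT.
by case: eqVneq => [->|_]; rewrite ?inordK ?mulr1 ?mulr0.
Qed.

Lemma sl2X_col g (l : 'I_d.+1) : g d.+1 = 0 ->
  (sl2X F d *m \col_(k < d.+1) g k) l 0 = l.+1%:R * g l.+1.
Proof.
move=> g_out; rewrite mxE.
have [lt_ld|le_dl] := ltnP l d.
  rewrite (bigD1 (inord l.+1)) //= big1 ?addr0 => [|p]; rewrite !mxE ?inordK ?eqxx //.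
  by rewrite -val_eqE /= inordK // eq_sym => /negbTE ->; rewrite mul0r.
have ld : (l : nat) = d by apply/eqP; rewrite eqn_leq le_dl -ltnS ltn_ord.
rewrite ld g_out mulr0 big1 // => p _.
by rewrite !mxE ld ltn_eqF ?mul0r.
Qed.

Lemma sl2Y_col g (l : 'I_d.+1) :
  (sl2Y F d *m \col_(k < d.+1) g k) l 0 =
  if (l : nat) is l'.+1 then (d - l')%:R * g l' else 0.
Proof.
rewrite mxE; case: l => [[|l] lt_ld] /=.
  by rewrite big1 // => p _; rewrite !mxE mul0r.
rewrite (bigD1 (inord l)) //= big1 ?addr0 => [|p]; rewrite !mxE ?inordK ?eqxx 1?ltnW //.
by rewrite -val_eqE /= inordK 1?ltnW // eqSS eq_sym => /negbTE ->; rewrite mul0r.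
Qed.

Lemma sl2H_col c (l : 'I_d.+1) :
  (sl2H F d *m c) l 0 = (d%:R - (2 * l)%:R) * c l 0.
Proof.
rewrite mxE (bigD1 l) //= big1 ?addr0 => [|p /negbTE]; rewrite !mxE ?eqxx //.
by rewrite eq_sym => ->; rewrite mul0r.
Qed.

Lemma highest_weight_vec c : sl2X F d *m c = 0 -> c = c 0 0 *: mono 0.
Proof.
move=> Xc; apply/matrixP => p z; rewrite (ord1 z) !mxE.
case: p => [[|l] lt_ld] /=; first by rewrite mulr1; congr (c _ 0); apply: val_inj.
rewrite mulr0; set g := fun k => if (k <= d)%N then c (inord k) 0 else 0.
have cg : c = \col_(k < d.+1) g k.
  by apply/matrixP => k y; rewrite (ord1 y) mxE /g leq_ord inord_val.
move/matrixP/(_ (inord l) 0): Xc; rewrite {1}cg sl2X_col /g ?ltnn // mxE.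
rewrite inordK ?(ltnW lt_ld) // -ltnS lt_ld => /eqP; rewrite mulf_eq0 pnatr_eq0 /= => /eqP c0.
by rewrite -c0; congr (c _ 0); apply: val_inj; rewrite /= inordK.
Qed.

Lemma sl2Y_pow_mono0 k : sl2Y F d ^+ k *m mono 0 = (d ^_ k)%:R *: mono k.
Proof.
elim: k => [|k IHk]; first by rewrite expr0 mul1mx scale1r.
by rewrite exprS -mulmxA IHk -scalemxAr sl2Y_mono scalerA -natrM ffactnSr.
Qed.

End Sl2Action.

Lemma form_delta (R : pzSemiRingType) m n (A : 'M[R]_(m, n)) (i : 'I_m) (j : 'I_n) :
  ((delta_mx i (0 : 'I_1))^T *m A *m delta_mx j (0 : 'I_1)) 0 0 = A i j.
Proof. by rewrite trmx_delta -rowE -colE !mxE. Qed.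

Section Reversal.
Variables (F : numClosedFieldType) (d : nat).
Definition revmx : 'M[F]_(d.+1) := \matrix_(i, j) ((i + j)%N == d)%:R.

Lemma trmx_revmx : revmx^T = revmx.
Proof. by apply/matrixP => i j; rewrite !mxE addnC. Qed.

Lemma mul_revmx_mx p (A : 'M[F]_(d.+1, p)) i j : (revmx *m A) i j = A (rev_ord i) j.
Proof.
rewrite mxE (bigD1 (rev_ord i)) //= big1 ?addr0 => [|a].
  by rewrite mxE /= subSS subnKC -1?ltnS // eqxx mul1r.
rewrite mxE -val_eqE /= subSS => ne_a; case: eqP => [ia|]; last by rewrite mul0r.
by case/eqP: ne_a; lia.
Qed.

Lemma mul_mx_revmx p (A : 'M[F]_(p, d.+1)) i j : (A *m revmx) i j = A i (rev_ord j).
Proof.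
by rewrite -[A *m _]trmxK trmx_mul trmx_revmx mxE mul_revmx_mx mxE.
Qed.

Lemma revmx_invol : revmx *m revmx = 1%:M.
Proof.
apply/matrixP => i j; rewrite mul_revmx_mx !mxE /= subSS.
have lt_i := ltn_ord i; have lt_j := ltn_ord j.
by have -> : (d - i + j == d)%N = (i == j) by rewrite -val_eqE /=; apply/eqP/eqP; lia.
Qed.

Lemma sl2X_revmx : sl2X F d *m revmx = revmx *m sl2Y F d.
Proof.
apply/matrixP => i j; rewrite mul_mx_revmx mul_revmx_mx !mxE /= !subSS.
have lt_i := ltn_ord i; have lt_j := ltn_ord j.
by have -> : (d - j == i.+1)%N = (d - i == j.+1)%N by apply/eqP/eqP; lia.
Qed.

Lemma sl2Y_revmx : sl2Y F d *m revmx = revmx *m sl2X F d.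
Proof.
apply/matrixP => i j; rewrite mul_mx_revmx mul_revmx_mx !mxE /= !subSS.
have lt_i := ltn_ord i; have lt_j := ltn_ord j.
have -> : (i == (d - j).+1 :> nat) = (j == (d - i).+1 :> nat) by apply/eqP/eqP; lia.
by rewrite subKn.
Qed.

Lemma sl2H_revmx : sl2H F d *m revmx = - (revmx *m sl2H F d).
Proof.
apply/matrixP => i j; rewrite -mulmxN mul_mx_revmx mul_revmx_mx !mxE (canF_eq rev_ordK).
case: eqP => [->|]; last by rewrite oppr0.
rewrite rev_ordK /= subSS natrM natrB -1?ltnS // natrM; ring.
Qed.

Lemma mxrank_revmx_conj (A : 'M[F]_(d.+1)) : \rank (revmx *m A *m revmx) = \rank A.
Proof.
have rank_le (B : 'M[F]_(d.+1)) : (\rank (revmx *m B *m revmx) <= \rank B)%N.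
  exact: leq_trans (mxrankM_maxl _ _) (mxrankM_maxr _ _).
apply/eqP; rewrite eqn_leq rank_le /=.
rewrite {1}(_ : A = revmx *m (revmx *m A *m revmx) *m revmx) ?rank_le //.
by rewrite !mulmxA revmx_invol mul1mx -mulmxA revmx_invol mulmx1.
Qed.

End Reversal.

Section GramMatrices.
Variables (F : numClosedFieldType) (r n : nat).
Implicit Types (T : 'I_n.+1 -> 'M[F]_(r.+1)) (u v : 'cV[F]_(r.+1)).

Lemma bilinZl T a u v : bilin T (a *: u) v = a *: bilin T u v.
Proof.
apply/matrixP => l z; rewrite [in RHS]mxE ![bilin _ _ _ _ _]mxE.
by rewrite linearZ /= -!scalemxAl mxE.
Qed.

Lemma bilinZr T a u v : bilin T u (a *: v) = a *: bilin T u v.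
Proof.
apply/matrixP => l z; rewrite [in RHS]mxE ![bilin _ _ _ _ _]mxE.
by rewrite -!scalemxAr mxE.
Qed.

Lemma bilinNl T u v : bilin T (- u) v = - bilin T u v.
Proof. by rewrite -scaleN1r bilinZl scaleN1r. Qed.

Lemma bilinNr T u v : bilin T u (- v) = - bilin T u v.
Proof. by rewrite -scaleN1r bilinZr scaleN1r. Qed.

Lemma bilin_lin T T' a b u v :
  bilin (fun l => a *: T l - b *: T' l) u v = a *: bilin T u v - b *: bilin T' u v.
Proof.
apply/matrixP => l z.
by rewrite [LHS]mxE mulmxBr mulmxBl -!scalemxAr -!scalemxAl !mxE.
Qed.

Lemma equivariant_lin T T' a b : equivariant T -> equivariant T' ->
  equivariant (fun l => a *: T l - b *: T' l).
Proof.
move=> [symT eqT] [symT' eqT']; split=> [l|u v].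
  by rewrite raddfB /= !linearZ /= symT symT'.
have [X1 H1 Y1] := eqT u v; have [X2 H2 Y2] := eqT' u v.
have comb (x1 x2 y1 y2 : 'cV[F]_(n.+1)) :
    a *: x1 - b *: y1 + (a *: x2 - b *: y2) = a *: (x1 + x2) - b *: (y1 + y2).
  by rewrite !scalerDr opprD addrACA.
by rewrite !bilin_lin !comb -X1 -H1 -Y1 -X2 -H2 -Y2 !mulmxBr -!scalemxAr.
Qed.

Definition rev_gram T l : 'M[F]_(r.+1) := revmx F r *m T (rev_ord l) *m revmx F r.

Lemma rev_gramK T l : rev_gram (rev_gram T) l = T l.
Proof.
by rewrite /rev_gram rev_ordK !mulmxA revmx_invol mul1mx -mulmxA revmx_invol mulmx1.
Qed.

Lemma bilin_rev_gram T u v :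
  bilin (rev_gram T) u v = revmx F n *m bilin T (revmx F r *m u) (revmx F r *m v).
Proof.
apply/matrixP => l z; rewrite (ord1 z) mul_revmx_mx [LHS]mxE [RHS]mxE.
by rewrite /rev_gram trmx_mul trmx_revmx !mulmxA.
Qed.

Lemma equivariant_rev_gram T : equivariant T -> equivariant (rev_gram T).
Proof.
move=> [symT eqT]; split=> [l|u v].
  by rewrite /rev_gram !trmx_mul trmx_revmx symT mulmxA.
have [X1 H1 Y1] := eqT (revmx F r *m u) (revmx F r *m v).
have PX w : revmx F r *m (sl2X F r *m w) = sl2Y F r *m (revmx F r *m w).
  by rewrite !mulmxA sl2Y_revmx.
have PY w : revmx F r *m (sl2Y F r *m w) = sl2X F r *m (revmx F r *m w).
  by rewrite !mulmxA sl2X_revmx.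
have PH w : revmx F r *m (sl2H F r *m w) = - (sl2H F r *m (revmx F r *m w)).
  by rewrite !mulmxA sl2H_revmx mulNmx opprK.
rewrite !bilin_rev_gram !mulmxA sl2X_revmx sl2Y_revmx sl2H_revmx mulNmx -!mulmxA.
rewrite X1 H1 Y1 !PX !PY !PH bilinNl bilinNr !mulmxN.
by split; rewrite mulmxDr // opprD.
Qed.

End GramMatrices.

Section Coefficients.
Variables (F : numClosedFieldType) (r n : nat) (T : 'I_n.+1 -> 'M[F]_(r.+1)).

(* The entries T_l(e_i, e_j), extended by zero outside the index ranges so that
   the recurrences below need no boundary cases. *)
Definition gram_coef (l i j : nat) : F :=
  if [&& (l <= n)%N, (i <= r)%N & (j <= r)%N] then T (inord l) (inord i) (inord j) else 0.

Lemma gram_coefE (l : 'I_n.+1) (i j : 'I_r.+1) : gram_coef l i j = T l i j.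
Proof. by rewrite /gram_coef !leq_ord !inord_val. Qed.

Lemma gram_coef_out l i j :
  ~~ [&& (l <= n)%N, (i <= r)%N & (j <= r)%N] -> gram_coef l i j = 0.
Proof. by rewrite /gram_coef => /negbTE ->. Qed.

Lemma bilin_mono i j : bilin T (mono F r i) (mono F r j) = \col_l gram_coef l i j.
Proof.
apply/matrixP => l z; rewrite (ord1 z) [LHS]mxE [RHS]mxE.
have [le_ir|lt_ri] := leqP i r; last first.
  by rewrite mono_out // trmx0 !mul0mx mxE gram_coef_out // leq_ord /= leqNgt lt_ri.
have [le_jr|lt_rj] := leqP j r; last first.
  by rewrite (@mono_out F r j lt_rj) mulmx0 mxE gram_coef_out // leq_ord le_ir /= leqNgt lt_rj.
by rewrite !mono_inord // form_delta /gram_coef leq_ord le_ir le_jr inord_val.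
Qed.

Hypothesis equivT : equivariant T.

Lemma gram_coefX l i j : (l <= n)%N -> (i <= r)%N -> (j <= r)%N ->
  l.+1%:R * gram_coef l.+1 i j = i%:R * gram_coef l i.-1 j + j%:R * gram_coef l i j.-1.
Proof.
move=> le_ln le_ir le_jr; have [eqX _ _] := equivT.2 (mono F r i) (mono F r j).
move/matrixP/(_ (inord l) 0): eqX.
rewrite !sl2X_mono // bilinZl bilinZr !bilin_mono (sl2X_col (g := fun k => gram_coef k i j)).
  by rewrite !mxE inordK.
by rewrite gram_coef_out // ltnn.
Qed.

Lemma gram_coefY0 i j :
  (r - i)%:R * gram_coef 0 i.+1 j + (r - j)%:R * gram_coef 0 i j.+1 = 0.
Proof.
have [_ _ eqY] := equivT.2 (mono F r i) (mono F r j).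
move/matrixP/(_ 0 0): eqY.
rewrite !sl2Y_mono bilinZl bilinZr !bilin_mono (sl2Y_col (fun k => gram_coef k i j)).
by rewrite !mxE => /esym.
Qed.

Variables (m : nat) (le_2m_r : (2 * m <= r)%N) (def_n : n = (2 * r - 4 * m)%N).

(* The weight of e_i e_j is (r - 2i) + (r - 2j), that of e_l is n - 2l. *)
Lemma gram_coef_support l i j : gram_coef l i j != 0 ->
  [/\ (l <= n)%N, (i <= r)%N, (j <= r)%N & (i + j = 2 * m + l)%N].
Proof.
move=> nz; have /and3P[le_ln le_ir le_jr] : [&& (l <= n)%N, (i <= r)%N & (j <= r)%N].
  by apply: contraNT nz => /gram_coef_out ->.
split=> //; have [_ eqH _] := equivT.2 (mono F r i) (mono F r j).
move/matrixP/(_ (inord l) 0): eqH.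
rewrite !sl2H_mono bilinZl bilinZr !bilin_mono sl2H_col !mxE inordK // => eqH.
have : ((n + 2 * i + 2 * j)%:R - (2 * l + r + r)%:R) * gram_coef l i j = 0 :> F.
  rewrite !natrD; transitivity ((n%:R - (2 * l)%:R) * gram_coef l i j -
    ((r%:R - (2 * i)%:R) * gram_coef l i j + (r%:R - (2 * j)%:R) * gram_coef l i j)).
    by ring.
  by rewrite eqH subrr.
move/eqP; rewrite mulf_eq0 (negbTE nz) orbF subr_eq0 eqr_nat => /eqP; lia.
Qed.

Lemma gram_coef_eq0 : gram_coef 0 0 (2 * m) = 0 -> forall l i j, gram_coef l i j = 0.
Proof.
move=> top0.
have level0 i : (i <= 2 * m)%N -> gram_coef 0 i (2 * m - i) = 0.
  elim: i => [|i IHi] le_i2m; first by rewrite subn0.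
  have := gram_coefY0 i (2 * m - i.+1).
  rewrite (_ : (2 * m - i.+1).+1 = 2 * m - i)%N; last lia.
  rewrite IHi ?mulr0 ?addr0; last lia.
  by move/eqP; rewrite mulf_eq0 pnatr_eq0 => /orP[/eqP|/eqP //]; lia.
elim=> [|l IHl] i j; apply/eqP; apply: contraT => nz.
  have [_ _ _ ij] := gram_coef_support nz.
  by rewrite (_ : j = 2 * m - i)%N ?level0 ?eqxx in nz; lia.
have [le_ln le_ir le_jr _] := gram_coef_support nz.
have := gram_coefX (ltnW le_ln) le_ir le_jr; rewrite !IHl !mulr0 addr0 => /eqP.
by rewrite mulf_eq0 pnatr_eq0 /= (negbTE nz).
Qed.

End Coefficients.

Section EquivariantGram.
Variables (F : numClosedFieldType) (r m n : nat).
Hypotheses (le_2m_r : (2 * m <= r)%N) (def_n : n = (2 * r - 4 * m)%N).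
Implicit Types T : 'I_n.+1 -> 'M[F]_(r.+1).

(* The entry that determines an equivariant map. *)
Local Notation top T := (gram_coef T 0 0 (2 * m)).

Lemma equivariant_eq0 T : equivariant T -> top T = 0 -> forall l, T l = 0.
Proof.
move=> equivT top0 l; apply/matrixP => i j.
by rewrite -gram_coefE (gram_coef_eq0 equivT le_2m_r def_n top0) mxE.
Qed.

Lemma gram_coef_lin T T' a b l i j :
  gram_coef (fun l => a *: T l - b *: T' l) l i j =
  a * gram_coef T l i j - b * gram_coef T' l i j.
Proof. by rewrite /gram_coef; case: ifP => _; rewrite ?mxE // !mulr0 subrr. Qed.

Lemma equivariant_top_scale T T' : equivariant T -> equivariant T' ->
  forall l, top T' *: T l = top T *: T' l.
Proof.
move=> equivT equivT' l; apply/eqP; rewrite -subr_eq0; apply/eqP.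
apply: (equivariant_eq0 (equivariant_lin _ _ equivT equivT')).
by rewrite gram_coef_lin mulrC subrr.
Qed.

Lemma mxrank_rev_gram_le T l : equivariant T -> (\rank (rev_gram T l) <= \rank (T l))%N.
Proof.
move=> equivT; have [top0|top_nz] := eqVneq (top T) 0.
  by rewrite /rev_gram (equivariant_eq0 equivT top0) mulmx0 mul0mx mxrank0.
have scaled := equivariant_top_scale equivT (equivariant_rev_gram equivT) l.
by rewrite -[rev_gram T l](scalerK top_nz) -scaled scalerA mxrank_scale.
Qed.

Lemma mxrank_rev_gram T l : equivariant T -> \rank (rev_gram T l) = \rank (T l).
Proof.
move=> equivT; apply/eqP; rewrite eqn_leq mxrank_rev_gram_le //=.
by have := mxrank_rev_gram_le l (equivariant_rev_gram equivT); rewrite rev_gramK.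
Qed.

Lemma mxrank_gram_rev_ord T l : equivariant T -> \rank (T (rev_ord l)) = \rank (T l).
Proof. by move=> equivT; rewrite -(mxrank_rev_gram l equivT) /rev_gram mxrank_revmx_conj. Qed.

Lemma mxrank_gram_le T (l : 'I_n.+1) : equivariant T -> (\rank (T l) <= 2 * m + l + 1)%N.
Proof.
move=> equivT; set p := (2 * m + l + 1)%N.
have low_rows : T l = pid_mx p *m T l.
  apply/matrixP => i j; rewrite mxE (bigD1 i) //= big1 ?addr0 => [|a /negbTE ne_ai].
    rewrite !mxE eqxx /=; case: ltnP => [_|le_pi]; first by rewrite mul1r.
    rewrite mul0r -gram_coefE; apply: contraTeq le_pi.
    move=> /(gram_coef_support equivT le_2m_r def_n).
    by case=> _ _ _ ij; rewrite -ltnNge /p; lia.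
  rewrite !mxE; case: eqP => [/val_inj ia|_]; last by rewrite mul0r.
  by rewrite ia eqxx in ne_ai.
rewrite low_rows.
have -> : pid_mx p = (pid_mx p : 'M[F]_(r.+1, p)) *m (pid_mx p : 'M_(p, r.+1)).
  by rewrite mul_pid_mx !minnn.
by rewrite -mulmxA mulmx_max_rank.
Qed.

End EquivariantGram.

Section HighestWeight.
Variables (F : numClosedFieldType) (r n : nat) (w0 : 'cV[F]_(n.+1)).
Hypothesis Xw0 : sl2X F n *m w0 = 0.

Lemma wvec_binomial (k : 'I_n.+1) : wvec w0 k = ('C(n, k)%:R * w0 0 0) *: delta_mx k 0.
Proof.
rewrite /wvec {1}(highest_weight_vec Xw0) -scalemxAr sl2Y_pow_mono0 !scalerA mono_ord.
congr (_ *: _); rewrite -bin_ffact natrM; field.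
by rewrite pnatr_eq0 -lt0n fact_gt0.
Qed.

Lemma gram_coords (T q : 'I_n.+1 -> 'M[F]_(r.+1)) :
  (forall u v, bilin T u v = \sum_(k < n.+1) (u^T *m q k *m v) 0 0 *: wvec w0 k) ->
  forall l, T l = ('C(n, l)%:R * w0 0 0) *: q l.
Proof.
move=> def_bilin l; apply/matrixP => i j.
move/matrixP/(_ l 0): (def_bilin (delta_mx i 0) (delta_mx j 0)).
rewrite [LHS]mxE form_delta summxE => ->; rewrite [RHS]mxE.
rewrite (bigD1 l) //= big1 ?addr0 => [|k ne_kl]; rewrite wvec_binomial form_delta !mxE.
  by rewrite eqxx mulr1 mulrC.
by rewrite eq_sym (negbTE ne_kl) mulr0 mulr0.
Qed.

End HighestWeight.

Unset Implicit Arguments.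

Theorem mainTheorem5 (F : numClosedFieldType) (r m n : nat)
  (hr : (2 <= r)%N) (hm : (2 * m <= r)%N) (hn : n = (2 * r - 4 * m)%N)
  (T : 'I_n.+1 -> 'M[F]_(r.+1)) (hT : equivariant T)
  (w0 : 'cV[F]_(n.+1)) (hw0 : w0 != 0) (hX : sl2X F n *m w0 = 0)
  (q : 'I_n.+1 -> 'M[F]_(r.+1)) (hq : forall k, (q k)^T = q k)
  (hf : forall u v : 'cV[F]_(r.+1),
      bilin T u v = \sum_(k < n.+1) (u^T *m q k *m v) 0 0 *: wvec w0 k) :
  forall k : 'I_n.+1, (2 * k <= n)%N ->
    \rank (q k) = \rank (q (rev_ord k)) /\ (\rank (q k) <= 2 * m + k + 1)%N.
Proof.
have w00 : w0 0 0 != 0.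
  by apply: contraNneq hw0 => w00; rewrite (highest_weight_vec hX) w00 scale0r.
have rank_q l : \rank (q l) = \rank (T l).
  by rewrite (gram_coords hX hf) mxrank_scale_nz // mulf_neq0 // pnatr_eq0 -lt0n bin_gt0 -ltnS.
move=> k _; rewrite !rank_q (mxrank_gram_rev_ord hm hn _ hT).
by split=> //; apply: mxrank_gram_le.
Qed.
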